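(* Let $\Sigma$ be a non-empty finite or countably infinite alphabet, $p$ a positive Bernoulli distribution on $\Sigma$, and $A=(Q,\Sigma,\delta,q_s,F)$ a strongly connected DFA with $F\ne\emptyset$. Then there is a real number $b$ with $0<b\le1$ such that for all $\epsilon>0$, $\lim_{n\to\infty}\mu_p(D_n^p(b,\epsilon))=1$.
   Context: $p:\Sigma\to(0,1]$ with $\sum_ap(a)=1$; $\mu_p(a_1\cdots a_n)=\prod_ip(a_i)$, $\mu_p(W)=\sum_{w\in W}\mu_p(w)$. $A_q$ is $A$ with start state $q$; for $w=w_1\cdots w_n$, $A_q[w]$ is the subsequence of those $w_i$ with $\delta^*(q,w_1\cdots w_{i-1})\in F$; $\#_a(v)$ counts occurrences of $a$ in $v$. Define $D_n^p(b,\epsilon,q)=\{w\in\Sigma^n: |A_q[w]|>bn\ \text{and}\ \sup_{a\in\Sigma}|\#_a(A_q[w])/|A_q[w]|-p(a)|<\epsilon\}$ and $D_n^p(b,\epsilon)=\bigcap_{q\in Q}D_n^p(b,\epsilon,q)$. $A$ is strongly connected if its underlying directed graph is strongly connected. *)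

From HB Require Import structures.
From mathcomp Require Import all_boot all_order all_algebra.
From mathcomp Require Import all_classical all_reals all_analysis.
Set Implicit Arguments. Unset Strict Implicit. Unset Printing Implicit Defensive.
Import Order.TTheory GRing.Theory Num.Theory.
Local Open Scope classical_set_scope.
Local Open Scope ring_scope.

Definition delta_star (Sigma : Type) (Q : Type) (delta : Q -> Sigma -> Q)
  (q : Q) (w : seq Sigma) : Q := foldl delta q w.

Fixpoint Asub (Sigma : Type) (Q : finType) (delta : Q -> Sigma -> Q)
  (F : {set Q}) (q : Q) (w : seq Sigma) : seq Sigma :=
  match w with
  | [::] => [::]
  | a :: w' => if q \in F then a :: Asub delta F (delta q a) w'
               else Asub delta F (delta q a) w'
  end.

Definition strongly_connected (Sigma : Type) (Q : Type)
  (delta : Q -> Sigma -> Q) : Prop :=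
  forall q q' : Q, exists w : seq Sigma, delta_star delta q w = q'.

Definition mu_p (R : realType) (Sigma : countType) (p : Sigma -> R) (n : nat)
  (W : set (n.-tuple Sigma)) : \bar R :=
  (\esum_(w in W) (\prod_(x <- w) p x)%:E)%R.

Definition Dq (R : realType) (Sigma : countType) (p : Sigma -> R)
  (Q : finType) (delta : Q -> Sigma -> Q) (F : {set Q})
  (n : nat) (b eps : R) (q : Q) : set (n.-tuple Sigma) :=
  [set w : n.-tuple Sigma |
     b * (n%:R : R) < ((size (Asub delta F q w))%:R : R) /\
     sup [set `| ((count_mem a (Asub delta F q w))%:R : R)
                 / ((size (Asub delta F q w))%:R : R) - p a | | a in [set: Sigma]]
       < eps].

Arguments Dq {R Sigma} p {Q} delta F n b eps q.

Definition D (R : realType) (Sigma : countType) (p : Sigma -> R)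
  (Q : finType) (delta : Q -> Sigma -> Q) (F : {set Q})
  (n : nat) (b eps : R) : set (n.-tuple Sigma) :=
  \bigcap_(q in [set: Q]) Dq p delta F n b eps q.

Arguments D {R Sigma} p {Q} delta F n b eps.
Arguments mu_p {R Sigma} p {n} W.

(* Over a finite alphabet G with law pG we compute
      expectations over words letter by letter ([expect]) and study sums of
      increments along a run of the automaton ([runsum]).  If every increment
      has mean zero, such a sum has second moment at most n*B (martingale
      orthogonality), hence is small with high probability (Chebyshev).
      - The number of F-visits is controlled by a Poisson-type equation: with
        [wait q] the truncated expected time to reach F, the number of visits
        exceeds c/(c+K) times the length up to such a martingale term
        ([visits_lower_bound]).
      - The count of letters of class j read in F minus its expected value is
        itself such a martingale ([runsum_class_count]).
      Words on which all these martingales are small ([good]) have mass at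
      least 1 - C/n ([good_prob]).
   2. Countable alphabet.  Letters are pushed to the finite alphabet
      G = (transition function, index in a finite list s of letters carrying
      mass >= 1 - eps/4), which preserves mu_p ([mu_p_push]).
   3. On good words every state visits F linearly often and every frequency is
      eps-close to p, so mu_p(D_n) >= 1 - C/n, whence the limit is 1. *)

From HB Require Import structures.
From mathcomp Require Import all_boot all_order all_algebra.
From mathcomp Require Import all_classical all_reals all_analysis.
From mathcomp Require Import ring lra.
Import Order.TTheory GRing.Theory Num.Theory numFieldNormedType.Exports.
Local Open Scope classical_set_scope.
Local Open Scope ring_scope.
Set Implicit Arguments. Unset Strict Implicit. Unset Printing Implicit Defensive.

Lemma ler_sum_term (R : numDomainType) (I : finType) (f : I -> R) :
  (forall j, 0 <= f j) -> forall i, f i <= \sum_j f j.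
Proof. by move=> f0 i; rewrite (bigD1 i) //= lerDl sumr_ge0. Qed.

Section FiniteAlphabet.
Variables (R : realType) (G : finType) (pG : G -> R).
Hypothesis pG_ge0 : forall g, 0 <= pG g.
Hypothesis pG_sum1 : \sum_g pG g = 1.

Fixpoint expect (n : nat) (h : seq G -> R) : R :=
  if n is n'.+1 then \sum_g pG g * expect n' (fun w => h (g :: w)) else h [::].

Lemma expect_ext n (h h' : seq G -> R) :
  (forall w, h w = h' w) -> expect n h = expect n h'.
Proof. by move=> /funext ->. Qed.

Lemma expect_le n (h h' : seq G -> R) :
  (forall w, size w = n -> h w <= h' w) -> expect n h <= expect n h'.
Proof.
elim: n h h' => [|n IH] h h' hle /=; first exact: hle.
apply: ler_sum => g _; apply: ler_wpM2l => //; apply: IH => w sw.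
by apply: hle; rewrite /= sw.
Qed.

Lemma expect_lin n a (h h' : seq G -> R) :
  expect n (fun w => a * h w + h' w) = a * expect n h + expect n h'.
Proof.
elim: n h h' => [|n IH] h h' //=.
rewrite mulr_sumr -big_split /=; apply: eq_bigr => g _.
by rewrite IH; ring.
Qed.

Lemma expect_const n c : expect n (fun _ => c) = c.
Proof.
elim: n c => [|n IH] c //=.
under eq_bigr do rewrite IH.
by rewrite -mulr_suml pG_sum1 mul1r.
Qed.

Lemma expect_scale n a (h : seq G -> R) :
  expect n (fun w => a * h w) = a * expect n h.
Proof.
rewrite -[RHS]addr0 -(expect_const n 0) -expect_lin.
by apply: expect_ext => w; rewrite addr0.
Qed.

Lemma expect_add n (h h' : seq G -> R) :
  expect n (fun w => h w + h' w) = expect n h + expect n h'.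
Proof.
rewrite -[expect n h]mul1r -expect_lin.
by apply: expect_ext => w; rewrite mul1r.
Qed.

Lemma expect_sum (I : Type) (r : seq I) n (h : I -> seq G -> R) :
  expect n (fun w => \sum_(i <- r) h i w) = \sum_(i <- r) expect n (h i).
Proof.
elim: r => [|i r IH].
  by rewrite big_nil -[RHS](expect_const n 0); apply: expect_ext => w; rewrite big_nil.
by rewrite big_cons -IH -expect_add; apply: expect_ext => w; rewrite big_cons.
Qed.

Lemma expect_divr n (h : seq G -> R) t :
  expect n (fun w => h w / t) = expect n h / t.
Proof. by rewrite mulrC -expect_scale; apply: expect_ext => w; rewrite mulrC. Qed.

Lemma expect_ge0 n (h : seq G -> R) :
  (forall w, 0 <= h w) -> 0 <= expect n h.
Proof.
by move=> h0; rewrite -(expect_const n 0); apply: expect_le => w _; exact: h0.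
Qed.

Lemma pG_le1 g : pG g <= 1.
Proof.
by rewrite -pG_sum1 (bigD1 g) //= lerDl; apply: sumr_ge0.
Qed.

Lemma prod_pG_le1 (u : seq G) : \prod_(g <- u) pG g <= 1.
Proof.
elim: u => [|g u IH]; rewrite ?big_nil ?big_cons //.
by rewrite mulr_ile1 // ?pG_le1 // prodr_ge0.
Qed.

Variables (Q : finType) (d : Q -> G -> Q).

Fixpoint runsum (x : Q -> G -> R) q w :=
  if w is g :: w' then x q g + runsum x (d q g) w' else 0.

Lemma runsum_mean0 x : (forall q, \sum_g pG g * x q g = 0) ->
  forall n q, expect n (runsum x q) = 0.
Proof.
move=> x0; elim=> [|n IH] q //=.
rewrite -[RHS](x0 q); apply: eq_bigr => g _; congr (_ * _).
by rewrite expect_add IH expect_const addr0.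
Qed.

Lemma runsum_second_moment x B : (forall q, \sum_g pG g * x q g = 0) ->
  (forall q g, x q g ^+ 2 <= B) ->
  forall n q, expect n (fun w => runsum x q w ^+ 2) <= n%:R * B.
Proof.
move=> x0 xB; elim=> [|n IH] q /=; first by rewrite mul0r expr0n /= lexx.
have -> : n.+1%:R * B = \sum_g pG g * (n.+1%:R * B).
  by rewrite -mulr_suml pG_sum1 mul1r.
apply: ler_sum => g _; apply: ler_wpM2l => //.
have -> : expect n (fun w => (x q g + runsum x (d q g) w) ^+ 2) =
    x q g ^+ 2 + (2 * x q g) * expect n (runsum x (d q g))
    + expect n (fun w => runsum x (d q g) w ^+ 2).
  rewrite -expect_scale -(expect_const n (x q g ^+ 2)) -!expect_add.
  by apply: expect_ext => w; ring.
by rewrite runsum_mean0 // mulr0 addr0 mulrSr mulrDl mul1r addrC lerD.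
Qed.

Variable F : {set Q}.

(* [avoid N q]: probability that the run from [q] stays outside [F] during the
   first [N] letters (states at times 0..N all outside F). *)
Fixpoint avoid N q : R := if q \in F then 0 else
  if N is N'.+1 then \sum_g pG g * avoid N' (d q g) else 1.

Lemma avoid_F N q : q \in F -> avoid N q = 0.
Proof. by case: N => [|N] /= ->. Qed.

Lemma avoidS N q :
  avoid N.+1 q = if q \in F then 0 else \sum_g pG g * avoid N (d q g).
Proof. by []. Qed.

Lemma avoid_01 N q : 0 <= avoid N q <= 1.
Proof.
elim: N q => [|N IH] q /=; case: (q \in F) => //; rewrite ?lexx ?ler01 //.
apply/andP; split.
  by apply: sumr_ge0 => g _; rewrite mulr_ge0 // (andP (IH _)).1.
rewrite -pG_sum1; apply: ler_sum => g _; rewrite ler_piMr //.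
exact: (andP (IH _)).2.
Qed.

Lemma avoid_nonincr N N' q : (N <= N')%N -> avoid N' q <= avoid N q.
Proof.
have step k q' : avoid k.+1 q' <= avoid k q'.
  elim: k q' => [|k IH] q'; rewrite avoidS; case: ifP => q'F //=; rewrite q'F //.
    rewrite -[X in _ <= X]pG_sum1; apply: ler_sum => g _.
    by rewrite ler_piMr //; case: ifP.
  by apply: ler_sum => g _; apply: ler_wpM2l => //; exact: IH.
move=> /subnK <-; elim: (N' - N)%N => [|k IH]; first by rewrite add0n.
by rewrite addSn; apply: le_trans (step _ _) IH.
Qed.

(* A word [u] leading from [q] into [F] is followed with probability at least
   its weight; on its complement, avoidance is bounded by [beta]. *)
Lemma avoid_word (u : seq G) q N beta : 0 <= beta ->
  (forall q', avoid N q' <= beta) -> foldl d q u \in F ->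
  avoid (N + size u) q <= (1 - \prod_(g <- u) pG g) * beta.
Proof.
elim: u q => [|g u IH] q b0 hb /=.
  by move=> qF; rewrite avoid_F // big_nil subrr mul0r.
move=> hu; rewrite addnS avoidS; case: ifP => qF.
  by rewrite mulr_ge0 // subr_ge0 big_cons mulr_ile1 ?pG_le1 ?prod_pG_le1 ?prodr_ge0.
rewrite (bigD1 g) //= big_cons.
have hg : avoid (N + size u) (d q g) <= (1 - \prod_(g0 <- u) pG g0) * beta.
  exact: IH.
have hother : \sum_(i | i != g) pG i * avoid (N + size u) (d q i)
    <= (1 - pG g) * beta.
  have -> : 1 - pG g = \sum_(i | i != g) pG i.
    by rewrite -pG_sum1 (bigD1 g) //= addrAC subrr add0r.
  rewrite mulr_suml; apply: ler_sum => i _; apply: ler_wpM2l => //.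
  by apply: le_trans (hb _); apply: avoid_nonincr; rewrite leq_addr.
apply: le_trans (lerD (ler_wpM2l (pG_ge0 g) hg) hother) _.
by rewrite le_eqVlt; apply/orP; left; apply/eqP; ring.
Qed.

Variables (K : nat) (c : R).
Hypothesis c_gt0 : 0 < c.
Hypothesis reach : forall q, exists u : seq G,
  foldl d q u \in F /\ (size u <= K)%N /\ c <= \prod_(g <- u) pG g.

Lemma avoidK q : avoid K q <= 1 - c.
Proof.
have [u [hu [su cu]]] := reach q.
apply: le_trans (avoid_nonincr q su) _.
have := @avoid_word u q 0%N 1 ler01 (fun q' => (andP (avoid_01 0 q')).2) hu.
by rewrite add0n mulr1 => h; apply: le_trans h _; lra.
Qed.

(* [wait q]: expected waiting time before entering [F], truncated at [K];
   [wait_next q]: its expectation after one letter. *)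
Definition wait q := \sum_(N < K) avoid N q.
Definition wait_next q := \sum_g pG g * wait (d q g).

Lemma wait_F q : q \in F -> wait q = 0.
Proof. by move=> qF; rewrite /wait big1 // => N _; rewrite avoid_F. Qed.

Lemma wait_bnd q : 0 <= wait q <= K%:R.
Proof.
apply/andP; split; first by apply: sumr_ge0 => N _; exact: (andP (avoid_01 _ _)).1.
apply: le_trans (_ : \sum_(N < K) (1 : R) <= _).
  by apply: ler_sum => N _; exact: (andP (avoid_01 _ _)).2.
by rewrite sumr_const card_ord.
Qed.

Lemma wait_next_bnd q : 0 <= wait_next q <= K%:R.
Proof.
apply/andP; split.
  by apply: sumr_ge0 => g _; rewrite mulr_ge0 // (andP (wait_bnd _)).1.
have -> : (K%:R : R) = \sum_g pG g * K%:R by rewrite -mulr_suml pG_sum1 mul1r.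
by apply: ler_sum => g _; apply: ler_wpM2l => //; exact: (andP (wait_bnd _)).2.
Qed.

(* Outside [F] the waiting time drops by one per letter, up to the truncation
   error [avoid K q]: a Poisson equation for [wait]. *)
Lemma wait_next_notF q : q \notin F -> wait_next q = wait q - 1 + avoid K q.
Proof.
move=> qF; rewrite /wait_next /wait.
under eq_bigr do rewrite mulr_sumr.
rewrite exchange_big /=.
have -> : \sum_(N < K) \sum_g pG g * avoid N (d q g) = \sum_(N < K) avoid N.+1 q.
  by apply: eq_bigr => N _; rewrite avoidS (negbTE qF).
have h1 : \sum_(i < K.+1) avoid i q = avoid 0 q + \sum_(i < K) avoid i.+1 q :=
  big_ord_recl K (fun N => avoid N q).
have h2 : \sum_(i < K.+1) avoid i q = \sum_(i < K) avoid i q + avoid K q :=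
  big_ord_recr K (fun N => avoid N q).
have e0 : avoid 0 q = 1 by rewrite /= (negbTE qF).
rewrite e0 in h1; lra.
Qed.

Definition wait_incr q g := wait_next q - wait (d q g).

Lemma wait_incr_mean0 q : \sum_g pG g * wait_incr q g = 0.
Proof.
rewrite /wait_incr; under eq_bigr do rewrite mulrBr.
by rewrite sumrB -mulr_suml pG_sum1 mul1r subrr.
Qed.

Lemma wait_incr_sq q g : wait_incr q g ^+ 2 <= K%:R ^+ 2.
Proof.
rewrite /wait_incr; have /andP[h1 h2] := wait_next_bnd q.
have /andP[h3 h4] := wait_bnd (d q g); nra.
Qed.

(* Telescoping the Poisson equation: in expectation each letter read outside
   [F] lowers the waiting time by at least [c], while [wait] stays in [0, K];
   so visits to [F] are linear in the length up to a martingale term. *)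
Lemma visits_lower_bound w q : c * (size w)%:R <=
  (c + K%:R) * (size (Asub d F q w))%:R - runsum wait_incr q w
  + wait q - wait (foldl d q w).
Proof.
elim: w q => [|g w IH] q /=; first by rewrite !mulr0 subr0 add0r subrr.
have IH1 := IH (d q g); rewrite /wait_incr.
have /andP[h1 h2] := wait_next_bnd q; have /andP[h3 h4] := wait_bnd q.
case qF: (q \in F) => /=.
  rewrite (wait_F qF) -addn1 natrD -(addn1 (size (Asub _ _ _ _))) natrD; nra.
have := wait_next_notF (negbT qF); have := avoidK q.
rewrite -addn1 natrD; nra.
Qed.

Variables (J : finType) (cl : G -> J).

Definition class_prob j := \sum_(g | cl g == j) pG g.

Definition class_incr j q g := (q \in F)%:R * ((cl g == j)%:R - class_prob j).

Lemma class_prob_01 j : 0 <= class_prob j <= 1.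
Proof.
apply/andP; split; first exact: sumr_ge0.
rewrite -pG_sum1 [X in _ <= X](bigID (fun g => cl g == j)) /= lerDl.
exact: sumr_ge0.
Qed.

Lemma class_incr_mean0 j q : \sum_g pG g * class_incr j q g = 0.
Proof.
have -> : \sum_g pG g * class_incr j q g = \sum_g ((q \in F)%:R *
    (pG g * (cl g == j)%:R) - ((q \in F)%:R * class_prob j) * pG g).
  by apply: eq_bigr => g _; rewrite /class_incr; ring.
rewrite sumrB -!mulr_sumr pG_sum1.
have -> : \sum_g pG g * (cl g == j)%:R = class_prob j.
  rewrite /class_prob [RHS]big_mkcond /=; apply: eq_bigr => g _.
  by case: (cl g == j); rewrite ?mulr1 ?mulr0.
ring.
Qed.

Lemma class_incr_sq j q g : class_incr j q g ^+ 2 <= 1.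
Proof.
rewrite /class_incr; have /andP[h1 h2] := class_prob_01 j.
by case: (q \in F); case: (cl g == j) => /=; nra.
Qed.

Lemma runsum_class_count j q w :
  runsum (class_incr j) q w = (count (fun g => cl g == j) (Asub d F q w))%:R
    - class_prob j * (size (Asub d F q w))%:R.
Proof.
elim: w q => [|g w IH] q /=; first by rewrite mulr0 subr0.
rewrite IH /class_incr; case: (q \in F) => /=; last by rewrite mul0r add0r.
by rewrite mul1r natrD -addn1 natrD; case: (cl g == j) => /=; ring.
Qed.

Variable eta : R.

Definition good n w := [forall q, (`|runsum wait_incr q w| <= c * n%:R / 2) &&
  [forall j, `|runsum (class_incr j) q w| <= eta * n%:R]].

Definition score n w q := runsum wait_incr q w ^+ 2 / (c * n%:R / 2) ^+ 2 +
  \sum_j runsum (class_incr j) q w ^+ 2 / (eta * n%:R) ^+ 2.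
Definition total_score n w := \sum_q score n w q.

Lemma score_ge0 n w q : 0 <= score n w q.
Proof.
by apply: addr_ge0; [|apply: sumr_ge0 => j _]; apply: divr_ge0; apply: sqr_ge0.
Qed.

Lemma good_indicator_lb n w : (0 < n)%N -> 0 < eta ->
  1 - total_score n w <= (good n w)%:R.
Proof.
move=> n0 eta0; have n0' : 0 < (n%:R : R) by rewrite ltr0n.
have sq_ge0 (x t : R) : 0 <= x ^+ 2 / t ^+ 2 by apply: divr_ge0; apply: sqr_ge0.
have cheb (x t : R) : 0 < t -> t < `|x| -> 1 <= x ^+ 2 / t ^+ 2.
  move=> t0 tx; rewrite ler_pdivlMr ?exprn_gt0 // mul1r -(real_normK (num_real x)).
  by have := normr_ge0 x; nra.
case: (boolP (good n w)) => hg.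
  by rewrite lerBlDr lerDl; apply: sumr_ge0 => q _; exact: score_ge0.
rewrite /= subr_le0 /total_score; move: hg => /forallPn [q hq].
apply: le_trans _ (ler_sum_term (fun q => score_ge0 n w q) q).
move: hq; rewrite negb_and -ltNge => /orP [h | /forallPn [j]].
  by apply: ler_wpDr; [exact: sumr_ge0 | apply: cheb h; rewrite divr_gt0 ?mulr_gt0].
rewrite -ltNge => h; apply: ler_wpDl => //.
apply: le_trans _ (ler_sum_term (fun j => sq_ge0 _ _) j).
by apply: cheb h; rewrite mulr_gt0.
Qed.

Lemma score_expect n q : (0 < n)%N -> 0 < eta ->
  expect n (fun w => score n w q)
  <= (4 * K%:R ^+ 2 / c ^+ 2 + #|J|%:R / eta ^+ 2) / n%:R.
Proof.
move=> n0 eta0; have n0' : 0 < (n%:R : R) by rewrite ltr0n.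
rewrite expect_add expect_divr expect_sum.
set t1 := (c * n%:R / 2) ^+ 2; set t2 := (eta * n%:R) ^+ 2.
have t10 : 0 < t1 by rewrite exprn_gt0 // divr_gt0 // mulr_gt0.
have t20 : 0 < t2 by rewrite exprn_gt0 // mulr_gt0.
have hphi := runsum_second_moment wait_incr_mean0 wait_incr_sq n q.
have hcls j : expect n (fun w => runsum (class_incr j) q w ^+ 2 / t2) <= n%:R / t2.
  rewrite expect_divr ler_pM2r ?invr_gt0 // -[X in _ <= X]mulr1.
  exact: runsum_second_moment (class_incr_mean0 j) (class_incr_sq j) n q.
have t1V : 0 <= t1^-1 by rewrite invr_ge0 ltW.
have hcls_sum : \sum_j expect n (fun w => runsum (class_incr j) q w ^+ 2 / t2)
    <= \sum_(j : J) n%:R / t2 := ler_sum _ (fun j _ => hcls j).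
apply: le_trans (lerD (ler_wpM2r t1V hphi) hcls_sum) _.
rewrite sumr_const -mulr_natl /t1 /t2 le_eqVlt; apply/orP; left; apply/eqP.
by field; rewrite !gt_eqF.
Qed.

Lemma good_prob n : (0 < n)%N -> 0 < eta ->
  1 - #|Q|%:R * (4 * K%:R ^+ 2 / c ^+ 2 + #|J|%:R / eta ^+ 2) / n%:R
  <= expect n (fun w => (good n w)%:R).
Proof.
move=> n0 eta0.
apply: le_trans (expect_le (h := fun w => -1 * total_score n w + 1) _); last first.
  by move=> w _; have := good_indicator_lb w n0 eta0; lra.
rewrite expect_lin expect_const /total_score expect_sum.
have hsum : \sum_q expect n (fun w => score n w q) <= \sum_(q : Q)
    (4 * K%:R ^+ 2 / c ^+ 2 + #|J|%:R / eta ^+ 2) / n%:R :=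
  ler_sum _ (fun q _ => score_expect q n0 eta0).
by rewrite sumr_const -mulr_natl mulrA in hsum; lra.
Qed.

Lemma good_visits n w q : size w = n -> 4 * K%:R < c * n%:R -> good n w ->
  c / (4 * (c + K%:R)) * n%:R < (size (Asub d F q w))%:R.
Proof.
move=> sw hn /forallP /(_ q) /andP [hphi _].
have hv := visits_lower_bound w q; rewrite sw in hv.
have /andP[a1 a2] := wait_bnd q; have /andP[a3 a4] := wait_bnd (foldl d q w).
move: hphi; rewrite ler_norml => /andP [m1 m2].
have cK : 0 < 4 * (c + K%:R) by rewrite mulr_gt0 // ltr_wpDr.
rewrite mulrAC ltr_pdivrMr //.
have hK : 0 <= (K%:R : R) by [].
nra.
Qed.

Lemma good_class_count n w q j : good n w ->
  `|(count (fun g => cl g == j) (Asub d F q w))%:R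
    - class_prob j * (size (Asub d F q w))%:R| <= eta * n%:R.
Proof. by move=> /forallP /(_ q) /andP [_ /forallP /(_ j)]; rewrite runsum_class_count. Qed.
End FiniteAlphabet.

Local Open Scope ereal_scope.

Lemma esumZ (R : realType) (T : choiceType) (I : set T) (g : T -> \bar R) (c : R) :
  (0 <= c)%R -> (forall i, 0 <= g i) ->
  \esum_(i in I) (c%:E * g i) = c%:E * \esum_(i in I) g i.
Proof.
move=> c0 g0; rewrite /esum -ereal_supZl //; last first.
  by apply/set0P; exists 0; exists set0; [exact: fsets_set0 | rewrite fsbig_set0].
congr ereal_sup; apply/seteqP; split => x /=.
  move=> [A hA <-]; exists (\sum_(i \in A) g i); first by exists A.
  by rewrite ge0_mule_fsumr.
by move=> [x0 [A hA <-] <-]; exists A => //; rewrite ge0_mule_fsumr.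
Qed.

Section Pushforward.
Variables (R : realType) (Sigma : countType) (p : Sigma -> R).
Hypothesis hp : forall a, (0 < p a <= 1)%R.
Hypothesis hsum : \esum_(a in [set: Sigma]) (p a)%:E = 1.

Lemma p_ge0 a : (0 <= p a)%R.
Proof. by have /andP[/ltW] := hp a. Qed.

Lemma mu_p_ge0 n (A : set (n.-tuple Sigma)) : 0 <= mu_p p A.
Proof. by apply: esum_ge0 => w _; rewrite lee_fin prodr_ge0 // => a _; exact: p_ge0. Qed.

Lemma mu_p_le n (A B : set (n.-tuple Sigma)) : A `<=` B -> mu_p p A <= mu_p p B.
Proof.
move=> AB; rewrite /mu_p esum_mkcond [X in _ <= X]esum_mkcond.
apply: le_esum => w _; case: ifP => hA.
  by rewrite ifT // inE; apply: AB; move: hA; rewrite inE.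
by case: ifP => // _; rewrite lee_fin prodr_ge0 // => a _; exact: p_ge0.
Qed.

Lemma esum_p_01 (S : set Sigma) : 0 <= \esum_(a in S) (p a)%:E <= 1.
Proof.
apply/andP; split; first by apply: esum_ge0 => a _; rewrite lee_fin p_ge0.
rewrite -hsum esum_mkcond; apply: le_esum => a _.
by case: ifP => _ //; rewrite lee_fin p_ge0.
Qed.

Lemma esum_p_fin (S : set Sigma) :
  \esum_(a in S) (p a)%:E = (fine (\esum_(a in S) (p a)%:E))%:E.
Proof.
have /andP[h1 h2] := esum_p_01 S.
by rewrite fineK // ge0_fin_numE //; exact: le_lt_trans h2 (ltry _).
Qed.

Lemma tail_mass_small e : (0 < e)%R -> exists s : seq Sigma,
  \esum_(a in [set: Sigma]) (p a * (a \notin s)%:R)%:E <= e%:E.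
Proof.
move=> e0; have : (1 - e)%:E < \esum_(a in [set: Sigma]) (p a)%:E.
  by rewrite hsum lte_fin; lra.
move=> /ereal_sup_gt [_ [A [finA _] <-] hA].
have [s hs] := (finite_seqP A).1 finA; exists s.
set Eout := \esum_(a in [set: Sigma]) (p a * (a \notin s)%:R)%:E.
set Ein := \esum_(a in [set: Sigma]) (p a * (a \in s)%:R)%:E.
have hsplit : Eout + Ein = 1.
  rewrite -hsum -esumD => [|a _|a _]; try by rewrite lee_fin mulr_ge0 ?p_ge0.
  by apply: eq_esum => a _; rewrite -EFinD; case: (a \in s) => /=; congr EFin; ring.
have hA_in : \sum_(i \in A) (p i)%:E <= Ein.
  apply: esum_ge; exists A => //; rewrite le_eqVlt; apply/orP; left; apply/eqP.
  by apply: eq_fsbigr => i /[!inE]; rewrite hs /= => ->; rewrite mulr1.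
have Eout0 : 0 <= Eout by apply: esum_ge0 => a _; rewrite lee_fin mulr_ge0 ?p_ge0.
have Ein0 : 0 <= Ein by apply: esum_ge0 => a _; rewrite lee_fin mulr_ge0 ?p_ge0.
have Eoutfin : Eout \is a fin_num.
  by rewrite ge0_fin_numE //; apply: (@le_lt_trans _ _ 1); [rewrite -hsplit leeDl | exact: ltry].
have Einfin : Ein \is a fin_num.
  by rewrite ge0_fin_numE //; apply: (@le_lt_trans _ _ 1); [rewrite -hsplit leeDr | exact: ltry].
rewrite -(fineK Eoutfin) lee_fin; move: hsplit (lt_le_trans hA hA_in).
rewrite -(fineK Eoutfin) -(fineK Einfin) -EFinD lte_fin => /eqP; rewrite eqe => /eqP.
lra.
Qed.

Variables (G : finType) (f : Sigma -> G).

Definition push_law g := fine (\esum_(a in [set a | f a = g]) (p a)%:E).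

Lemma push_law_ge0 g : (0 <= push_law g)%R.
Proof. by rewrite /push_law fine_ge0 // (andP (esum_p_01 _)).1. Qed.

Lemma esum_push (h : G -> R) : (forall g, 0 <= h g)%R ->
  \esum_(a in [set: Sigma]) (p a * h (f a))%:E = (\sum_g push_law g * h g)%:E.
Proof.
move=> h0.
transitivity (\esum_(a in [set: Sigma]) \sum_(g <- index_enum G)
   (if f a == g then (h g)%:E * (p a)%:E else 0)).
  apply: eq_esum => a _; rewrite (bigD1 (f a)) //= eqxx big1 ?adde0.
    by rewrite -EFinM mulrC.
  by move=> g /negbTE; rewrite eq_sym => ->.
rewrite esum_sum; last first.
  by move=> a g _ _; case: ifP => _ //; rewrite -EFinM lee_fin mulr_ge0 // p_ge0.
rewrite -sumEFin; apply: eq_bigr => g _.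
transitivity (\esum_(a in [set: Sigma])
    ((h g)%:E * (if f a == g then (p a)%:E else 0))).
  by apply: eq_esum => a _; case: ifP => _; rewrite ?mule0.
rewrite esumZ //; last by move=> a; case: ifP => _ //; rewrite lee_fin p_ge0.
have -> : \esum_(a in [set: Sigma]) (if f a == g then (p a)%:E else 0) =
          \esum_(a in [set a | f a = g]) (p a)%:E.
  rewrite [RHS]esum_mkcond; apply: eq_esum => a _.
  case: eqP => hh; case: ifP => // h'.
    by move: h' => /negbT/negP; case; apply: mem_set.
  by move: h' => /set_mem.
by rewrite esum_p_fin -EFinM mulrC.
Qed.

Lemma push_law_sum1 : (\sum_g push_law g = 1)%R.
Proof.
have := esum_push (h := fun _ => 1%R) (fun _ => ler01).
under eq_esum do rewrite mulr1.
rewrite hsum => /esym /eqP; rewrite eqe => /eqP <-.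
by apply: eq_bigr => g _; rewrite mulr1.
Qed.

Lemma p_le_push_law a : (p a <= push_law (f a))%R.
Proof.
rewrite -lee_fin /push_law -esum_p_fin; apply: esum_ge; exists [set a].
  by split; [exact: finite_set1 | move=> x /= ->].
by rewrite fsbig_set1.
Qed.

Lemma class_prob_esum (J : eqType) (cl : G -> J) j :
  (\sum_(g | cl g == j) push_law g)%:E =
  \esum_(a in [set: Sigma]) (p a * (cl (f a) == j)%:R)%:E.
Proof.
rewrite (esum_push (h := fun g => (cl g == j)%:R)); last by move=> g; case: (_ == _).
congr EFin; rewrite big_mkcond /=; apply: eq_bigr => g _.
by case: (cl g == j); rewrite ?mulr1 ?mulr0.
Qed.

Lemma mu_p_push n (P : seq G -> bool) :
  mu_p p [set w : n.-tuple Sigma | P (map f w)] =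
  (expect push_law n (fun v => (P v)%:R))%:E.
Proof.
elim: n P => [|n IH] P.
  rewrite /mu_p /=; case hP: (P [::]).
    have -> : [set w : 0.-tuple Sigma | P (map f w)] = [set [tuple]].
      by apply/seteqP; split => w /=; rewrite (tuple0 w) /= ?hP.
    by rewrite esum_set1 ?big_nil // lee_fin ler01.
  have -> : [set w : 0.-tuple Sigma | P (map f w)] = set0.
    by apply/seteqP; split => w //=; rewrite (tuple0 w) /= hP.
  by rewrite esum_set0.
rewrite /mu_p.
pose J := fun a : Sigma => [set w' : n.-tuple Sigma | P (f a :: map f w')].
rewrite (reindex_esum ([set: Sigma] `*`` J) _ (fun x => [tuple of x.1 :: x.2]));
    last first.
  split.
  - by move=> [a w] /= [_ hw].
  - by move=> [a w] [a2 w2] _ _ /= /(congr1 val) /= [-> /val_inj ->].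
  - move=> w /= hw; have e : tval w = thead w :: behead w := congr1 val (tuple_eta w).
    exists (thead w, [tuple of behead w]).
      by split => //=; rewrite /J /=; move: hw; rewrite /= e.
    by apply: val_inj; rewrite /= e.
under eq_esum do rewrite /= big_cons EFinM.
rewrite -(esum_esum (I := [set: Sigma]) (J := J)
  (a := fun a (w : n.-tuple Sigma) => (p a)%:E * (\prod_(x <- w) p x)%:E)); last first.
  by move=> a w _ _; rewrite -EFinM lee_fin mulr_ge0 ?prodr_ge0 // => *; exact: p_ge0.
under eq_esum => a _.
  rewrite esumZ; [|exact: p_ge0|by move=> w; rewrite lee_fin prodr_ge0 // => *; exact: p_ge0].
  have := IH (fun v => P (f a :: v)); rewrite /mu_p => ->.
  rewrite -EFinM.
  over.
rewrite (esum_push (h := fun g => expect push_law n (fun v => (P (g :: v))%:R))) //.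
move=> g; apply: (expect_ge0 push_law_ge0 push_law_sum1).
by move=> w; case: (P _).
Qed.

End Pushforward.

Lemma index_inj (T : eqType) (s : seq T) a a0 : a0 \in s ->
  (index a s == index a0 s) = (a == a0).
Proof.
move=> h0; apply/eqP/eqP => [e|-> //].
have : (index a s < size s)%N by rewrite e index_mem.
by rewrite index_mem => ha; rewrite -(nth_index a ha) e nth_index.
Qed.

(* Letter classes: one class per element of a finite list [s] of letters, and
   one class [ord_max] for all the remaining letters. *)
Section LetterIndex.
Variables (R : realType) (Sigma : countType) (p : Sigma -> R).
Hypothesis hp : forall a, (0 < p a <= 1)%R.
Hypothesis hsum : \esum_(a in [set: Sigma]) (p a)%:E = 1.
Variables (G : finType) (f : Sigma -> G) (s : seq Sigma) (cl : G -> 'I_(size s).+1).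
Hypothesis cl_f : forall a, cl (f a) = inord (index a s).

Lemma cl_f_eq a a0 : a0 \in s -> (cl (f a) == inord (index a0 s)) = (a == a0).
Proof.
move=> h0; rewrite cl_f -val_eqE /= !inordK ?ltnS ?index_size //.
exact: index_inj.
Qed.

Lemma cl_f_max a : (cl (f a) == ord_max) = (a \notin s).
Proof.
rewrite cl_f -val_eqE /= inordK ?ltnS ?index_size //.
by rewrite -index_mem ltn_neqAle index_size andbT negbK.
Qed.

Lemma class_prob_listed a0 : a0 \in s ->
  class_prob (push_law p f) cl (inord (index a0 s)) = p a0.
Proof.
move=> h0; apply/eqP; rewrite -eqe; apply/eqP.
rewrite /class_prob (class_prob_esum hp hsum).
transitivity (\esum_(a in [set: Sigma]) (if a \in [set a0] then (p a)%:E else 0)).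
  apply: eq_esum => a _; rewrite cl_f_eq //.
  case: eqP => [->|ne]; first by rewrite mulr1 ifT // inE.
  by rewrite mulr0 ifF //; apply/negP => /set_mem.
by rewrite -esum_mkcond esum_set1 // lee_fin (p_ge0 hp).
Qed.

Lemma class_prob_tail :
  (class_prob (push_law p f) cl ord_max)%:E =
  \esum_(a in [set: Sigma]) (p a * (a \notin s)%:R)%:E.
Proof.
by rewrite /class_prob (class_prob_esum hp hsum); apply: eq_esum => a _; rewrite cl_f_max.
Qed.

Lemma p_le_class_prob_tail a : a \notin s ->
  (p a <= class_prob (push_law p f) cl ord_max)%R.
Proof.
move=> ha; rewrite -lee_fin class_prob_tail.
apply: esum_ge; exists [set a]; first by split; [exact: finite_set1|].
by rewrite fsbig_set1 ha mulr1.
Qed.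

End LetterIndex.

Section CoarserAlphabet.
Variables (Sigma G : Type) (Q : finType) (delta : Q -> Sigma -> Q)
  (dG : Q -> G -> Q) (f : Sigma -> G).
Hypothesis dG_f : forall q a, dG q (f a) = delta q a.

Lemma foldl_push (w : seq Sigma) q : foldl dG q (map f w) = foldl delta q w.
Proof. by elim: w q => [|a w IH] q //=; rewrite dG_f IH. Qed.

Lemma Asub_push (F : {set Q}) (w : seq Sigma) q :
  Asub dG F q (map f w) = map f (Asub delta F q w).
Proof. by elim: w q => [|a w IH] q //=; rewrite dG_f IH; case: (q \in F). Qed.

End CoarserAlphabet.

Lemma mu_p_le1 (R : realType) (Sigma : countType) (p : Sigma -> R)
  (hp : forall a, (0 < p a <= 1)%R)
  (hsum : \esum_(a in [set: Sigma]) (p a)%:E = 1) n (A : set (n.-tuple Sigma)) :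
  mu_p p A <= 1.
Proof.
have hT := mu_p_push hp hsum (fun=> tt) n (fun=> true).
rewrite (expect_const (push_law_sum1 hp hsum _)) in hT.
by rewrite -hT; exact: (mu_p_le hp (fun w _ => isT)).
Qed.

Local Close Scope ereal_scope.

Lemma cvg_one_from_lower_bound (R : realType) (u : nat -> \bar R) (C : R) (N0 : nat) :
  0 <= C -> (0 < N0)%N -> (forall n, (0 <= u n <= 1)%E) ->
  (forall n, (N0 <= n)%N -> ((1 - C / n%:R)%:E <= u n)%E) -> u @ \oo --> 1%E.
Proof.
move=> C0 N0_gt0 u01 low.
have ufin n : u n \is a fin_num.
  by have /andP[h0 h1] := u01 n; rewrite ge0_fin_numE //; exact: le_lt_trans h1 (ltry _).
apply/fine_cvgP; split; first exact: nearW.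
apply: (@squeeze_cvgr _ _ _ _ (fun n => 1 - (2 * C) * harmonic n) (fun=> 1)); last 2 first.
- rewrite -[X in _ --> X]subr0; apply: cvgB; first exact: cvg_cst.
  by rewrite -(mulr0 (2 * C)); apply: cvgMl_tmp; exact: cvg_harmonic.
- exact: cvg_cst.
exists N0 => // n /= hn.
have /andP[_] := u01 n; have := low n hn.
rewrite -(fineK (ufin n)) !lee_fin => hlow -> /=; rewrite andbT.
apply: le_trans hlow; rewrite lerD2l lerN2 /=.
have n0 : 0 < n%:R :> R by rewrite ltr0n; exact: leq_trans hn.
have hn2 : n.+1%:R <= 2 * n%:R :> R.
  by rewrite -natrM ler_nat mul2n -addnn -addn1 leq_add2l; exact: leq_trans hn.
rewrite ler_pdivrMr // mulrAC ler_pdivlMr ?ltr0n //; nra.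
Qed.

Lemma ratio_dev_bound (R : realFieldType) (C r V e b n : R) : 0 < V -> 0 <= e ->
  b * n < V -> `|C - r * V| <= b * e / 4 * n -> `|C / V - r| <= e / 4.
Proof.
move=> V0 e0 hb hC.
have -> : C / V - r = (C - r * V) / V by field; rewrite gt_eqF.
rewrite normrM normfV (gtr0_norm V0) ler_pdivrMr //.
by apply: le_trans hC _; nra.
Qed.

Lemma visit_rate_01 (R : realFieldType) (c : R) (K : nat) :
  0 < c -> 0 < c / (4 * (c + K%:R)) <= 1.
Proof.
move=> c0; have cK : 0 < 4 * (c + K%:R) by rewrite mulr_gt0 // ltr_wpDr.
rewrite divr_gt0 //= ler_pdivrMr // mul1r.
have : 0 <= K%:R :> R by []; lra.
Qed.

Lemma uniform_reach (R : realType) (Sigma : countType) (p : Sigma -> R)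
  (hp : forall a, 0 < p a <= 1) (Q : finType) (delta : Q -> Sigma -> Q)
  (F : {set Q}) : F != finset.set0 -> strongly_connected delta ->
  exists (K : nat) (c : R), 0 < c /\ forall q, exists u : seq Sigma,
    delta_star delta q u \in F /\ (size u <= K)%N /\ c <= \prod_(a <- u) p a.
Proof.
move=> /set0Pn [qF qFF] hsc.
have [W hW] := choice (fun q => hsc q qF).
have p01 a : 0 <= p a <= 1 by have /andP[/ltW -> ->] := hp a.
have p_ge0 a : 0 <= p a by case/andP: (p01 a).
exists (\sum_q size (W q))%N, (\prod_q \prod_(a <- W q) p a); split.
  by apply: prodr_gt0 => q _; apply: prodr_gt0 => a _; case/andP: (hp a).
move=> q; exists (W q); split; first by rewrite hW.
split; first by rewrite (bigD1 q) //= leq_addr.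
rewrite (bigD1 q) //= ler_piMr //; first exact: prodr_ge0.
apply: prodr_ile1 => q' _; rewrite prodr_ge0 //=; exact: prodr_ile1.
Qed.

Section DLowerBound.
Variables (R : realType) (Sigma : countType) (s0 : Sigma) (p : Sigma -> R).
Hypothesis hp : forall a, 0 < p a <= 1.
Hypothesis hsum : (\esum_(a in [set: Sigma]) (p a)%:E = 1)%E.
Variables (Q : finType) (delta : Q -> Sigma -> Q) (F : {set Q}) (K : nat) (c : R).
Hypothesis c_gt0 : 0 < c.
Hypothesis reach : forall q, exists u : seq Sigma,
  delta_star delta q u \in F /\ (size u <= K)%N /\ c <= \prod_(a <- u) p a.
Variables (eps : R) (s : seq Sigma).
Hypothesis eps_gt0 : 0 < eps.
Hypothesis tail_small :
  (\esum_(a in [set: Sigma]) (p a * (a \notin s)%:R)%:E <= (eps / 4)%:E)%E.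

Let G := ({ffun Q -> Q} * 'I_(size s).+1)%type.
Let f (a : Sigma) : G := ([ffun q => delta q a], inord (index a s)).
Let dG q (g : G) := g.1 q.
Let cl (g : G) := g.2.
Let pG := push_law p f.
Let b := c / (4 * (c + K%:R)).
Let eta := b * eps / 4.

Let dG_f q a : dG q (f a) = delta q a.
Proof. by rewrite /dG /= ffunE. Qed.

Let cl_f a : cl (f a) = inord (index a s).
Proof. by []. Qed.

Let b_gt0 : 0 < b.
Proof. by have /andP[] := visit_rate_01 K c_gt0. Qed.

Lemma reach_pushed q : exists u : seq G,
  foldl dG q u \in F /\ (size u <= K)%N /\ c <= \prod_(g <- u) pG g.
Proof.
have [u [hu [su cu]]] := reach q; exists (map f u); split.
  by rewrite (foldl_push dG_f).
split; first by rewrite size_map.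
apply: le_trans cu _; rewrite big_map; apply: ler_prod => a _.
by rewrite (p_ge0 hp) /=; exact: (p_le_push_law hp hsum f a).
Qed.

Lemma letter_freq_close n (L : seq Sigma) a :
  b * n%:R < (size L)%:R ->
  (forall j, `|(count (fun g => cl g == j) (map f L))%:R
                - class_prob pG cl j * (size L)%:R| <= eta * n%:R) ->
  `|(count_mem a L)%:R / (size L)%:R - p a| <= eps / 2.
Proof.
move=> hbL hdev.
have L_gt0 : 0 < (size L)%:R :> R by apply: le_lt_trans hbL; rewrite mulr_ge0 // ltW.
have pa := hp a; have e0 := ltW eps_gt0.
have class_freq j : `|(count (preim f (fun g => cl g == j)) L)%:R / (size L)%:R
    - class_prob pG cl j| <= eps / 4.
  by apply: ratio_dev_bound L_gt0 e0 hbL _; rewrite -count_map; exact: hdev.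
have [a_in | a_out] := boolP (a \in s).
  have := class_freq (inord (index a s)).
  rewrite (class_prob_listed hp hsum cl_f a_in).
  rewrite (eq_count (a2 := pred1 a)) => [|x /=]; first lra.
  by rewrite -(cl_f x) (cl_f_eq cl_f _ a_in).
have := class_freq ord_max.
have tail_le := p_le_class_prob_tail hp hsum cl_f a_out.
have tail_class_small : class_prob pG cl ord_max <= eps / 4.
  by rewrite -lee_fin (class_prob_tail hp hsum cl_f).
have hcnt : (count_mem a L <= count (preim f (fun g => cl g == ord_max)) L)%N.
  by apply: sub_count => y /= /eqP ->; rewrite -(cl_f a) (cl_f_max cl_f) a_out.
have ha_freq : (count_mem a L)%:R / (size L)%:R
    <= (count (preim f (fun g => cl g == ord_max)) L)%:R / (size L)%:R :> R.
  by rewrite ler_pM2r ?invr_gt0 // ler_nat.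
have ha0 : 0 <= (count_mem a L)%:R / (size L)%:R :> R by rewrite divr_ge0.
rewrite !ler_norml => /andP [h1 h2]; apply/andP; split; lra.
Qed.

Lemma good_in_D n (w : n.-tuple Sigma) : 4 * K%:R < c * n%:R ->
  good pG dG F K c cl eta n (map f w) -> D p delta F n b eps w.
Proof.
move=> hn hgood q _; set L := Asub delta F q w.
have hsize : size (map f w) = n by rewrite size_map size_tuple.
have hAsub := Asub_push dG_f F (tval w) q.
have hvis := good_visits (push_law_ge0 hp hsum f) (push_law_sum1 hp hsum f)
  c_gt0 reach_pushed q hsize hn hgood.
rewrite hAsub size_map -/L in hvis; split; first exact: hvis.
have half_lt : eps / 2 < eps by rewrite ltr_pdivrMr // ltr_pMr // ltr1n.
apply: le_lt_trans half_lt.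
apply: ge_sup; first by exists `|(count_mem s0 L)%:R / (size L)%:R - p s0|, s0.
move=> x [a _ <-]; apply: letter_freq_close hvis _ => j.
by have := good_class_count q j hgood; rewrite hAsub size_map.
Qed.

Lemma D_lower_bound : exists (C : R) (N0 : nat), 0 <= C /\ (0 < N0)%N /\
  forall n, (N0 <= n)%N -> ((1 - C / n%:R)%:E <= mu_p p (D p delta F n b eps))%E.
Proof.
have pG_ge0 := push_law_ge0 hp hsum f; have pG_sum1 := push_law_sum1 hp hsum f.
have eta_gt0 : 0 < eta by rewrite /eta; have := mulr_gt0 b_gt0 eps_gt0; lra.
have K_ge0 : 0 <= K%:R :> R by [].
exists (#|Q|%:R * (4 * K%:R ^+ 2 / c ^+ 2 + #|'I_(size s).+1|%:R / eta ^+ 2)).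
exists (Num.Def.archi_bound (4 * K%:R / c)).+1; split.
  by apply: mulr_ge0 => //; apply: addr_ge0; apply: divr_ge0; rewrite ?sqr_ge0 ?mulr_ge0.
split => // n hn.
have n_gt0 : (0 < n)%N by apply: leq_trans hn.
have hcn : 4 * K%:R < c * n%:R.
  have := archi_boundP (divr_ge0 (mulr_ge0 (ler0n _ 4) K_ge0) (ltW c_gt0)).
  rewrite [c * _]mulrC -ltr_pdivrMr // => /lt_trans; apply.
  by rewrite ltr_nat.
apply: (@le_trans _ _ (mu_p p [set w : n.-tuple Sigma |
    good pG dG F K c cl eta n (map f w)])).
  rewrite (mu_p_push hp hsum) lee_fin.
  exact: (good_prob pG_ge0 pG_sum1 dG F K c_gt0 cl n_gt0 eta_gt0).
exact: (mu_p_le hp (fun w => @good_in_D n w hcn)).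
Qed.

End DLowerBound.

Unset Implicit Arguments.
Set Strict Implicit.

Theorem lemma5p7 (R : realType) (Sigma : countType) (s0 : Sigma)
  (p : Sigma -> R) (hp : forall a, 0 < p a <= 1)
  (hsum : (\esum_(a in [set: Sigma]) (p a)%:E)%R = 1%E)
  (Q : finType) (delta : Q -> Sigma -> Q) (qs : Q) (F : {set Q})
  (hF : F != finset.set0) (hsc : strongly_connected delta) :
  exists b : R, 0 < b <= 1 /\
    forall eps : R, 0 < eps ->
      (fun n => mu_p p (D p delta F n b eps)) @ \oo --> 1%E.
Proof.
have [K [c [c_gt0 reach]]] := uniform_reach hp hF hsc.
exists (c / (4 * (c + K%:R))); split; first exact: visit_rate_01.
move=> eps eps_gt0.
have [s tail_small] := tail_mass_small hp hsum (divr_gt0 eps_gt0 (ltr0n _ 4)).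
have [C [N0 [C_ge0 [N0_gt0 lower]]]] :=
  D_lower_bound s0 hp hsum c_gt0 reach eps_gt0 tail_small.
apply: (cvg_one_from_lower_bound C_ge0 N0_gt0 _ lower) => n.
by rewrite mu_p_ge0 ?mu_p_le1.
Qed.
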